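(* Let $\gamma\geq0$, $G=(V,E,\omega)\in\mathcal C_\gamma$, and let $V'$ be a proper subset of $V$. Assume $u,v\in\mathcal V$ satisfy $(Lu)_i\geq(Lv)_i$ for all $i\in V'$ and $u_i\geq v_i$ for all $i\in V\setminus V'$. Then $u_i\geq v_i$ for all $i\in V$.
   Context: $\mathcal{G}$ is the set of finite, simple, connected, undirected, edge-weighted graphs $G=(V,E,\omega)$ with $V=\{1,\dots,n\}$, $n\geq2$, weights $\omega_{ij}=\omega_{ji}>0$ on edges, $0$ otherwise. $d_i=\sum_j\omega_{ij}$. $\mathcal V$: functions $V\to\mathbb R$. Fixed $r\in[0,1]$: $(\Delta u)_i=d_i^{-r}\sum_j\omega_{ij}(u_i-u_j)$, $\mathcal M(u)=\sum_id_i^ru_i$, $\mathrm{vol}(V)=\sum_id_i^r$, $\mathcal A(u)=\frac{\mathcal M(u)}{\mathrm{vol}(V)}\chi_V$. For $u\in\mathcal V$ let $\varphi$ be the unique solution of $\Delta\varphi=u-\mathcal A(u)$, $\mathcal M(\varphi)=0$, and $Lu:=\Delta u+\gamma\varphi$. For a proper subset $S\subsetneq V$, the equilibrium measure $\nu^S$ is the unique $\nu\in\mathcal V$ with $(\Delta\nu)_i=1$ on $S$ and $\nu_i=0$ off $S$. $f^j:=\nu^{V\setminus\{j\}}-\mathcal A(\nu^{V\setminus\{j\}})$. $\mathcal C^0=\{G\in\mathcal G:\forall j\ \forall i\neq j:\ \omega_{ij}>0\text{ or }f^j_i\geq0\}$; for $\gamma>0$, $\mathcal C_\gamma=\{G\in\mathcal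 C^0:\forall j\ \forall i\neq j:\ \omega_{ij}=0\text{ or }d_i^{-r}\omega_{ij}+\gamma\frac{d_j^r}{\mathrm{vol}(V)}f^j_i>0\}$; $\mathcal C_0:=\mathcal G$. *)

From HB Require Import structures.
From mathcomp Require Import all_boot all_order all_algebra.
From mathcomp Require Import reals exp.
From Stdlib Require Import ClassicalEpsilon.
Set Implicit Arguments. Unset Strict Implicit. Unset Printing Implicit Defensive.
Import Order.TTheory GRing.Theory Num.Theory.
Local Open Scope ring_scope.

Section GraphDefs.
Variables (R : realType) (n : nat) (r : R) (w : 'I_n -> 'I_n -> R).

(* G = (V, E, w) in the class \mathcal G: V = {0..n-1}, n >= 2, symmetric
   nonnegative weights (edge iff w i j > 0), no loops, connected. *)
Definition is_graph : Prop :=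
  [/\ (2 <= n)%N,
      (forall i j, w i j = w j i),
      (forall i j, 0 <= w i j),
      (forall i, w i i = 0) &
      (forall i j, connect (fun a b => 0 < w a b) i j)].

Definition deg (i : 'I_n) : R := \sum_j w i j.

Definition Lap (u : 'I_n -> R) (i : 'I_n) : R :=
  powR (deg i) (- r) * \sum_j w i j * (u i - u j).

Definition Mass (u : 'I_n -> R) : R := \sum_i powR (deg i) r * u i.
Definition vol : R := \sum_i powR (deg i) r.
Definition Avg (u : 'I_n -> R) : 'I_n -> R := fun _ => Mass u / vol.

Definition phi (u : 'I_n -> R) : 'I_n -> R :=
  epsilon (inhabits (fun _ => 0))
    (fun p => (forall i, Lap p i = u i - Avg u i) /\ Mass p = 0).

Definition Lop (gamma : R) (u : 'I_n -> R) (i : 'I_n) : R :=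
  Lap u i + gamma * phi u i.

Definition eqmeas (S : {set 'I_n}) : 'I_n -> R :=
  epsilon (inhabits (fun _ => 0))
    (fun nu => (forall i, i \in S -> Lap nu i = 1) /\
               (forall i, i \notin S -> nu i = 0)).

Definition fj (j : 'I_n) : 'I_n -> R :=
  fun i => eqmeas [set~ j] i - Avg (eqmeas [set~ j]) i.

Definition inC0 : Prop :=
  forall j i : 'I_n, i != j -> 0 < w i j \/ 0 <= fj j i.

Definition inCgamma (gamma : R) : Prop :=
  gamma = 0 \/
  (0 < gamma /\ inC0 /\
   forall j i : 'I_n, i != j ->
     w i j = 0 \/
     0 < powR (deg i) (- r) * w i j + gamma * (powR (deg j) r / vol) * fj j i).

End GraphDefs.

(* L is a difference operator, (L u)_i = sum_k c_ik (u_i - u_k), with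
   c_ik = d_i^{-r} w_ik + gamma mu_k f^k_i and mu_k = d_k^r / vol(V).  Indeed
   phi(u) = - sum_k mu_k u_k f^k, because Delta f^k = 1 - delta_k / mu_k (read
   off from the mass identity M(Delta y) = 0) and Delta is injective on
   mass-zero functions; and sum_k mu_k f^k = 0 rewrites this in difference form.
   The conditions defining C_gamma say exactly that c_ik >= 0 for i <> k and
   c_ik > 0 along edges.  Such an operator satisfies the minimum principle on a
   connected graph: at a minimum of z where (L z)_i >= 0 every neighbour shares
   the minimum, so a negative minimum of z with L z >= 0 on the proper subset V'
   would spread to a vertex outside V', where z >= 0.  Apply it to z = u - v. *)

From mathcomp Require Import all_boot all_order all_algebra.
From mathcomp Require Import reals exp.
From Stdlib Require Import ClassicalEpsilon.
From mathcomp Require Import ring lra.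
Set Implicit Arguments. Unset Strict Implicit. Unset Printing Implicit Defensive.
Import Order.TTheory GRing.Theory Num.Theory.
Local Open Scope ring_scope.

Section MinimumPrinciple.
Variables (R : realDomainType) (T : finType) (e : rel T) (c : T -> T -> R).
Hypothesis c_ge0 : forall i k, i != k -> 0 <= c i k.
Hypothesis c_gt0 : forall i k, e i k -> 0 < c i k.
Hypothesis e_connected : forall i j, connect e i j.

Local Notation D z i := (\sum_k c i k * (z i - z k)).

Lemma min_edge_eq (z : T -> R) i k :
  (forall j, z i <= z j) -> 0 <= D z i -> e i k -> z k = z i.
Proof.
move=> zmin Dz_ge0 eik.
have terms_ge0 j : 0 <= c i j * (z j - z i).
  have [<-|ij] := eqVneq i j; first by rewrite subrr mulr0.
  by rewrite mulr_ge0 ?c_ge0 // subr_ge0.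
have terms_sum0 : \sum_j c i j * (z j - z i) = 0.
  apply/eqP; rewrite eq_le sumr_ge0 // andbT -oppr_ge0 -sumrN.
  by under eq_bigr do rewrite -mulrN opprB.
have /eqP := psumr_eq0P (fun j _ => terms_ge0 j) terms_sum0 (i := k) isT.
by rewrite mulf_eq0 gt_eqF ?c_gt0 //= subr_eq0 => /eqP.
Qed.

Lemma min_connect_eq (z : T -> R) i0 :
  (forall j, z i0 <= z j) -> (forall i, z i = z i0 -> 0 <= D z i) ->
  forall j, z j = z i0.
Proof.
move=> zmin Dz_ge0 j.
have e_sym : connect_sym e by move=> x y; rewrite !e_connected.
have min_closed : closed e [pred i | z i == z i0].
  apply: intro_closed => // x y exy /eqP zx; apply/eqP.
  by rewrite (@min_edge_eq z x y _ (Dz_ge0 x zx) exy) // => k; rewrite zx.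
apply/eqP; have := closed_connect min_closed (e_connected i0 j).
by rewrite !inE eqxx => <-.
Qed.

Lemma superharmonic_const (z : T -> R) :
  (forall i, 0 <= D z i) -> forall i j, z i = z j.
Proof.
move=> Dz_ge0 i j; pose i0 := [arg min_(k < i) z k]%O.
have zmin k : z i0 <= z k by rewrite /i0; case: arg_minP => // a _; apply.
by rewrite !(@min_connect_eq z i0 zmin (fun k _ => Dz_ge0 k)).
Qed.

Lemma minimum_principle (S : {set T}) (z : T -> R) :
  S != setT -> (forall i, i \in S -> 0 <= D z i) ->
  (forall i, i \notin S -> 0 <= z i) -> forall i, 0 <= z i.
Proof.
rewrite -properT => /properP [_ [x _ xS]] Dz_ge0 z_ge0.
pose i0 := [arg min_(k < x) z k]%O.
have zmin k : z i0 <= z k by rewrite /i0; case: arg_minP => // a _; apply.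
suff z0_ge0 : 0 <= z i0 by move=> i; apply: le_trans z0_ge0 (zmin i).
rewrite leNgt; apply/negP => z0_lt0.
have minS i : z i = z i0 -> i \in S.
  by move=> zi; apply: contraTT z0_lt0 => /z_ge0; rewrite -zi -leNgt.
have := z_ge0 x xS.
rewrite (@min_connect_eq z i0 zmin (fun i zi => Dz_ge0 i (minS i zi))).
by rewrite leNgt z0_lt0.
Qed.

End MinimumPrinciple.

Section Laplacian.
Variables (R : realType) (n : nat) (r : R) (w : 'I_n -> 'I_n -> R).
Hypothesis graph_w : is_graph w.

Let n_gt1 : (1 < n)%N. Proof. by case: graph_w. Qed.
Let w_sym i j : w i j = w j i. Proof. by case: graph_w. Qed.
Let w_ge0 i j : 0 <= w i j. Proof. by case: graph_w. Qed.
Let w_diag i : w i i = 0. Proof. by case: graph_w. Qed.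
Let w_connected i j : connect (fun a b => 0 < w a b) i j.
Proof. by case: graph_w. Qed.

Local Notation dr i := (powR (deg w i) r).
Local Notation drN i := (powR (deg w i) (- r)).
Local Notation mu k := (powR (deg w k) r / vol r w).

Lemma deg_gt0 i : 0 < deg w i.
Proof.
have /set0Pn [j] : [set~ i] != set0.
  by rewrite -card_gt0 cardsC1 card_ord -subn1 subn_gt0.
rewrite in_setC1 => ji.
have /connectP [[|k p] /= path_ik j_last] := w_connected i j.
  by move: ji; rewrite j_last eqxx.
case/andP: path_ik => wik _.
by rewrite /deg (bigD1 k) //= ltr_wpDr // sumr_ge0.
Qed.

Lemma dr_gt0 i : 0 < dr i.
Proof. by rewrite powR_gt0 // deg_gt0. Qed.

Lemma dr_drN i : dr i * drN i = 1.
Proof. by rewrite powRN mulfV // gt_eqF ?dr_gt0. Qed.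

Lemma vol_gt0 : 0 < vol r w.
Proof.
rewrite /vol (bigD1 (Ordinal (ltnW n_gt1))) //= ltr_wpDr ?dr_gt0 //.
by rewrite sumr_ge0 // => k _; rewrite powR_ge0.
Qed.

Lemma Lap_coef_ge0 i k : 0 <= drN i * w i k.
Proof. by rewrite mulr_ge0 ?powR_ge0. Qed.

Lemma Lap_coef_gt0 i k : 0 < w i k -> 0 < drN i * w i k.
Proof. by move=> wik; rewrite mulr_gt0 ?powR_gt0 ?deg_gt0. Qed.

Lemma LapE u i : Lap r w u i = \sum_k (drN i * w i k) * (u i - u k).
Proof. by rewrite /Lap mulr_sumr; under eq_bigr do rewrite mulrA. Qed.

Lemma LapB u v i : Lap r w (fun k => u k - v k) i = Lap r w u i - Lap r w v i.
Proof. by rewrite !LapE -sumrB; apply: eq_bigr => k _; ring. Qed.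

Lemma LapN u i : Lap r w (fun k => - u k) i = - Lap r w u i.
Proof. by rewrite !LapE -sumrN; apply: eq_bigr => k _; ring. Qed.

Lemma Lap_subr u a i : Lap r w (fun k => u k - a) i = Lap r w u i.
Proof. by rewrite !LapE; apply: eq_bigr => k _; ring. Qed.

Lemma Lap_lincomb (g : 'I_n -> R) (F : 'I_n -> 'I_n -> R) i :
  Lap r w (fun j => \sum_k g k * F k j) i = \sum_k g k * Lap r w (F k) i.
Proof.
rewrite LapE; under eq_bigr do rewrite -sumrB mulr_sumr.
rewrite exchange_big; apply: eq_bigr => k _ /=.
by rewrite LapE mulr_sumr; apply: eq_bigr => l _; ring.
Qed.

Lemma MassB u v : Mass r w (fun k => u k - v k) = Mass r w u - Mass r w v.
Proof. by rewrite /Mass -sumrB; apply: eq_bigr => k _; ring. Qed.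

Lemma Mass_lincomb (g : 'I_n -> R) (F : 'I_n -> 'I_n -> R) :
  Mass r w (fun j => \sum_k g k * F k j) = \sum_k g k * Mass r w (F k).
Proof.
rewrite /Mass; under eq_bigr do rewrite mulr_sumr.
rewrite exchange_big; apply: eq_bigr => k _ /=.
by rewrite mulr_sumr; apply: eq_bigr => l _; ring.
Qed.

(* The weights d_i^r cancel d_i^{-r}, leaving a sum antisymmetric in (i, k). *)
Lemma Mass_Lap u : Mass r w (Lap r w u) = 0.
Proof.
set S := \sum_i \sum_k w i k * (u i - u k).
have -> : Mass r w (Lap r w u) = S.
  by apply: eq_bigr => i _; rewrite /Lap mulrA dr_drN mul1r.
have : S = - S.
  rewrite {1}/S exchange_big -sumrN; apply: eq_bigr => i _.
  by rewrite -sumrN; apply: eq_bigr => k _; rewrite w_sym; ring.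
lra.
Qed.

Lemma Lap_minimum_principle (S : {set 'I_n}) (z : 'I_n -> R) :
  S != setT -> (forall i, i \in S -> 0 <= Lap r w z i) ->
  (forall i, i \notin S -> 0 <= z i) -> forall i, 0 <= z i.
Proof.
move=> SnT Lz_ge0.
apply: (@minimum_principle _ _ _ (fun i k => drN i * w i k)
  (fun i k _ => Lap_coef_ge0 i k) Lap_coef_gt0 w_connected _ _ SnT).
by move=> i /Lz_ge0; rewrite LapE.
Qed.

Lemma Lap_eq0 u : (forall i, Lap r w u i = 0) -> Mass r w u = 0 ->
  forall i, u i = 0.
Proof.
move=> Lu0 Mu0 i.
have u_const k : u k = u i.
  apply: (@superharmonic_const _ _ _ (fun i k => drN i * w i k)
    (fun i k _ => Lap_coef_ge0 i k) Lap_coef_gt0 w_connected) => j.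
  by rewrite -LapE Lu0.
have : Mass r w u = u i * vol r w.
  rewrite /Mass /vol mulr_sumr.
  by apply: eq_bigr => k _; rewrite u_const mulrC.
by rewrite Mu0 => /esym/eqP; rewrite mulf_eq0 (gt_eqF vol_gt0) orbF => /eqP.
Qed.

Lemma dirichlet_unique (S : {set 'I_n}) (u : 'I_n -> R) :
  S != setT -> (forall i, i \in S -> Lap r w u i = 0) ->
  (forall i, i \notin S -> u i = 0) -> forall i, u i = 0.
Proof.
move=> SnT Lu0 u0 i; apply/eqP; rewrite eq_le; apply/andP; split.
  rewrite -oppr_ge0; apply: (@Lap_minimum_principle S (fun k => - u k) SnT).
    by move=> k /Lu0; rewrite LapN => ->; rewrite oppr0.
  by move=> k /u0 ->; rewrite oppr0.
apply: (@Lap_minimum_principle S u SnT) => k; first by move/Lu0 ->.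
by move/u0 ->.
Qed.

Definition lapmx : 'M[R]_n :=
  \matrix_(k, i) (drN i * ((k == i)%:R * deg w i - w i k)).

Lemma mul_lapmx (x : 'rV[R]_n) i :
  (x *m lapmx) 0 i = Lap r w (fun k => x 0 k) i.
Proof.
have delta : \sum_k x 0 k * ((k == i)%:R * deg w i) = x 0 i * deg w i.
  rewrite (bigD1 i) //= eqxx mul1r big1 ?addr0 // => k /negbTE ->.
  by rewrite mul0r mulr0.
rewrite mxE; under eq_bigr do rewrite mxE mulrCA mulrBr.
rewrite -mulr_sumr sumrB delta /Lap; congr (_ * _).
by rewrite /deg mulr_sumr -sumrB; apply: eq_bigr => k _; ring.
Qed.

Lemma dirichlet_solvable (S : {set 'I_n}) (f : 'I_n -> R) : S != setT ->
  exists nu, (forall i, i \in S -> Lap r w nu i = f i) /\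
             (forall i, i \notin S -> nu i = 0).
Proof.
move=> SnT.
pose B : 'M[R]_n :=
  \matrix_(k, i) (if i \in S then lapmx k i else (k == i)%:R).
have mulB (x : 'rV[R]_n) i :
    (x *m B) 0 i = if i \in S then Lap r w (fun k => x 0 k) i else x 0 i.
  rewrite mxE; under eq_bigr do rewrite mxE; case: (i \in S).
    by rewrite -mul_lapmx mxE.
  by rewrite -{2}(mulmx1 x) mxE; under [RHS]eq_bigr do rewrite mxE.
have B_unit : B \in unitmx.
  rewrite unitmxE unitfE; apply/det0P => -[x x_neq0 xB0].
  apply: (negP x_neq0); apply/eqP/rowP => k; rewrite mxE.
  apply: (@dirichlet_unique S (fun k => x 0 k) SnT) => i iS.
    by have := mulB x i; rewrite xB0 mxE iS.
  by have := mulB x i; rewrite xB0 mxE (negbTE iS).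
pose b : 'rV[R]_n := \row_i (if i \in S then f i else 0).
exists (fun k => (b *m invmx B) 0 k); split=> i iS.
  by have := mulB (b *m invmx B) i; rewrite mulmxKV // mxE iS.
by have := mulB (b *m invmx B) i; rewrite mulmxKV // mxE (negbTE iS).
Qed.

Lemma eqmeasP (S : {set 'I_n}) : S != setT ->
  (forall i, i \in S -> Lap r w (eqmeas r w S) i = 1) /\
  (forall i, i \notin S -> eqmeas r w S i = 0).
Proof.
by move=> SnT; apply: (epsilon_spec _ _ (dirichlet_solvable (fun=> 1) SnT)).
Qed.

Lemma setC1_neqT (k : 'I_n) : [set~ k] != setT.
Proof. by apply/eqP => /setP/(_ k); rewrite !inE eqxx. Qed.

Lemma Lap_eqmeasC1 k i :
  Lap r w (eqmeas r w [set~ k]) i = 1 - (i == k)%:R * (vol r w / dr k).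
Proof.
have [Lnu1 _] := @eqmeasP [set~ k] (setC1_neqT k).
have [->|ik] := eqVneq i k; last by rewrite Lnu1 ?inE // mul0r subr0.
set L := Lap r w _ k.
have drk_L : dr k * L = dr k - vol r w.
  have := Mass_Lap (eqmeas r w [set~ k]); rewrite /Mass (bigD1 k) //= -/L.
  under eq_bigr => j jk do rewrite Lnu1 ?inE // mulr1.
  by move=> Mass0; rewrite /vol (bigD1 k) //=; lra.
rewrite -[L](mulKf (lt0r_neq0 (dr_gt0 k))) drk_L mul1r.
by field; rewrite gt_eqF ?dr_gt0.
Qed.

Lemma Lap_fj k i : Lap r w (fj r w k) i = 1 - (i == k)%:R * (vol r w / dr k).
Proof. by rewrite /fj /Avg Lap_subr Lap_eqmeasC1. Qed.

Lemma Mass_fj k : Mass r w (fj r w k) = 0.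
Proof.
rewrite /fj /Avg /Mass; under eq_bigr do rewrite mulrBr.
rewrite sumrB -mulr_suml -/(vol r w); field.
by rewrite gt_eqF // vol_gt0.
Qed.

Lemma sum_mu : \sum_k mu k = 1.
Proof. by rewrite -mulr_suml divff // gt_eqF // vol_gt0. Qed.

Lemma sum_mu_fj i : \sum_k mu k * fj r w k i = 0.
Proof.
apply: (@Lap_eq0 (fun j => \sum_k mu k * fj r w k j)) => [j|]; last first.
  by rewrite Mass_lincomb big1 // => k _; rewrite Mass_fj mulr0.
rewrite Lap_lincomb; under eq_bigr do rewrite Lap_fj mulrBr mulr1.
rewrite sumrB sum_mu (bigD1 j) //= eqxx big1 ?addr0; last first.
  by move=> k /negbTE kj; rewrite eq_sym kj mul0r mulr0.
by rewrite mul1r mulrA divfK ?divff ?subrr // gt_eqF ?vol_gt0 ?dr_gt0.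
Qed.

Lemma phi_unique u p :
  (forall i, Lap r w p i = u i - Avg r w u i) -> Mass r w p = 0 ->
  forall i, phi r w u i = p i.
Proof.
move=> Lp Mp i.
pose spec q := (forall i, Lap r w q i = u i - Avg r w u i) /\ Mass r w q = 0.
have [Lphi Mphi] : spec (phi r w u).
  by apply: (epsilon_spec _ spec); exists p.
apply/eqP; rewrite -subr_eq0; apply/eqP.
apply: (@Lap_eq0 (fun k => phi r w u k - p k)) => [k|].
  by rewrite LapB Lphi Lp subrr.
by rewrite MassB Mphi Mp subrr.
Qed.

Lemma phiE u i : phi r w u i = \sum_k (mu k * fj r w k i) * (u i - u k).
Proof.
have -> : \sum_k (mu k * fj r w k i) * (u i - u k) =
          \sum_k - (mu k * u k) * fj r w k i.
  rewrite (eq_bigr (fun k => u i * (mu k * fj r w k i) -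
                             mu k * u k * fj r w k i));
    last by move=> k _; ring.
  rewrite sumrB -mulr_sumr sum_mu_fj mulr0 sub0r -sumrN.
  by apply: eq_bigr => k _; ring.
apply: (@phi_unique u (fun j => \sum_k - (mu k * u k) * fj r w k j)) => [j|];
  last first.
  by rewrite Mass_lincomb big1 // => k _; rewrite Mass_fj mulr0.
rewrite Lap_lincomb; under eq_bigr do rewrite Lap_fj mulrBr mulr1.
rewrite sumrB [X in _ - X](bigD1 j) //= eqxx [X in _ - (_ + X)]big1 ?addr0;
  last first.
  by move=> k /negbTE kj; rewrite eq_sym kj mul0r mulr0.
rewrite sumrN /Avg /Mass mulr_suml; under eq_bigr do rewrite mulrAC.
by rewrite mul1r; field; rewrite !gt_eqF ?dr_gt0 ?vol_gt0.
Qed.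

Definition Lcoef (gamma : R) i k := drN i * w i k + gamma * mu k * fj r w k i.

Lemma LopE gamma u i :
  Lop r w gamma u i = \sum_k Lcoef gamma i k * (u i - u k).
Proof.
rewrite /Lop LapE phiE mulr_sumr -big_split /=.
by apply: eq_bigr => k _; rewrite /Lcoef; ring.
Qed.

Lemma LopB gamma u v i :
  Lop r w gamma u i - Lop r w gamma v i =
  \sum_k Lcoef gamma i k * ((u i - v i) - (u k - v k)).
Proof. by rewrite !LopE -sumrB; apply: eq_bigr => k _; ring. Qed.

Lemma Lcoef_ge0 gamma : inCgamma r w gamma ->
  forall i k, i != k -> 0 <= Lcoef gamma i k.
Proof.
case=> [->|[gamma_gt0 [C0 Cgamma]]] i k ik.
  by rewrite /Lcoef !mul0r addr0 Lap_coef_ge0.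
have [wik0|/ltW //] := Cgamma k i ik.
have [|fj_ge0] := C0 k i ik; first by rewrite wik0 ltxx.
rewrite /Lcoef wik0 mulr0 add0r mulr_ge0 // mulr_ge0 ?(ltW gamma_gt0) //.
by rewrite divr_ge0 ?powR_ge0 // ltW // vol_gt0.
Qed.

Lemma Lcoef_gt0 gamma : inCgamma r w gamma ->
  forall i k, 0 < w i k -> 0 < Lcoef gamma i k.
Proof.
case=> [->|[_ [_ Cgamma]]] i k wik.
  by rewrite /Lcoef !mul0r addr0 Lap_coef_gt0.
have ik : i != k by apply: contraTneq wik => ->; rewrite w_diag ltxx.
by have [wik0|] := Cgamma k i ik; first by rewrite wik0 ltxx in wik.
Qed.

End Laplacian.

Theorem lemma6p25 (R : realType) (n : nat) (r gamma : R)
    (w : 'I_n -> 'I_n -> R) :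
  0 <= r -> r <= 1 ->
  is_graph w ->
  0 <= gamma ->
  inCgamma r w gamma ->
  forall (V' : {set 'I_n}), V' != setT ->
  forall (u v : 'I_n -> R),
    (forall i, i \in V' -> Lop r w gamma v i <= Lop r w gamma u i) ->
    (forall i, i \notin V' -> v i <= u i) ->
    forall i, v i <= u i.
Proof.
move=> _ _ graph_w _ Cgamma V' V'nT u v Luv uv i.
have w_connected : forall i j, connect (fun a b => 0 < w a b) i j.
  by case: graph_w.
rewrite -subr_ge0; apply: (minimum_principle (Lcoef_ge0 graph_w Cgamma)
  (Lcoef_gt0 graph_w Cgamma) w_connected (z := fun k => u k - v k) V'nT)
  => [j /Luv|j /uv]; by rewrite -subr_ge0 ?LopB.
Qed.
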